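(* Let $p,q$ be coprime integers with $q>0$ and let $G(p,q)=\langle a,b\mid a^2ba^2b^2a^{-1}b^2,\ m^pl^q\rangle$, where $m=a^{-1}b^{-2}$ and $l=ab^{-1}a^2m^{-18}$. Let $k\in G(p,q)$ be an element with $m=k^q$ and $l=k^{-p}$. Suppose $G(p,q)$ acts on the right on $\mathbb{R}$ by orientation-preserving homeomorphisms, $x\mapsto xg$. If $xk>x$ for all $x\in\mathbb{R}$, then $x>xb$ for all $x\in\mathbb{R}$.
   Context: $G(p,q)$ is the fundamental group of $p/q$-Dehn surgery on the $(-2,3,7)$-pretzel knot, with $m$, $l$ the meridian and longitude. *)

From Stdlib Require Import Reals ZArith List.
Import ListNotations.
Open Scope R_scope.

(** Words in the free group on generators a, b. A letter (g, e) is g if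
    e = false and g^{-1} if e = true. *)
Inductive gen := Ga | Gb.
Definition letter := (gen * bool)%type.
Definition word := list letter.

Definition wa : word := [(Ga, false)].
Definition wb : word := [(Gb, false)].
Definition wainv : word := [(Ga, true)].
Definition wbinv : word := [(Gb, true)].

Definition winv (w : word) : word := rev (map (fun '(g, e) => (g, negb e)) w).
Definition wrep (n : nat) (w : word) : word := concat (repeat w n).
Definition wpow (w : word) (z : Z) : word :=
  match z with
  | Z0 => []
  | Zpos n => wrep (Pos.to_nat n) w
  | Zneg n => wrep (Pos.to_nat n) (winv w)
  end.

Definition rel1 : word := wa ++ wa ++ wb ++ wa ++ wa ++ wb ++ wb ++ wainv ++ wb ++ wb.
Definition merid : word := wainv ++ wbinv ++ wbinv.
Definition longi : word := wa ++ wbinv ++ wa ++ wa ++ wpow merid (-18).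
Definition rel2 (p q : Z) : word := wpow merid p ++ wpow longi q.

Inductive Geq (p q : Z) : word -> word -> Prop :=
| Geq_refl : forall w, Geq p q w w
| Geq_sym : forall u v, Geq p q u v -> Geq p q v u
| Geq_trans : forall u v w, Geq p q u v -> Geq p q v w -> Geq p q u w
| Geq_cancel : forall u v g e, Geq p q (u ++ [(g, e); (g, negb e)] ++ v) (u ++ v)
| Geq_rel1 : forall u v, Geq p q (u ++ rel1 ++ v) (u ++ v)
| Geq_rel2 : forall u v, Geq p q (u ++ rel2 p q ++ v) (u ++ v).

(** A right action of G(p,q) on R by orientation-preserving homeomorphisms,
    given on representing words: act w x = x w. *)
Definition is_oriented_homeo (f : R -> R) : Prop :=
  continuity f /\ (forall x y, x < y -> f x < f y) /\ (forall y, exists x, f x = y).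

Definition right_action_by_homeo (p q : Z) (act : word -> R -> R) : Prop :=
  (forall u v, Geq p q u v -> forall x, act u x = act v x) /\
  (forall x, act [] x = x) /\
  (forall u v x, act (u ++ v) x = act v (act u x)) /\
  (forall w, is_oriented_homeo (act w)).

(** The relator a^2 b a^2 b^2 a^{-1} b^2, rewritten in the generators b and
    m = a^{-1} b^{-2}, says that b^{-1} = m (b^2 m b^{-2}) (m^{-1} b^{-2} m b^2 m),
    a product of conjugates of m.  If k moves every point to the right then so
    does m = k^q (as q > 0), hence so do its conjugates and their product b^{-1};
    applied at x b this gives x > x b. *)

From Stdlib Require Import Reals ZArith List Lra Lia.
Import ListNotations.
Open Scope R_scope.

Lemma Geq_cons p q x u v : Geq p q u v -> Geq p q (x :: u) (x :: v).
Proof.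
  induction 1.
  - apply Geq_refl.
  - now apply Geq_sym.
  - eapply Geq_trans; eassumption.
  - exact (Geq_cancel p q (x :: u) v g e).
  - exact (Geq_rel1 p q (x :: u) v).
  - exact (Geq_rel2 p q (x :: u) v).
Qed.

Lemma Geq_winv_app p q w : Geq p q (winv w ++ w) [].
Proof.
  induction w as [|[g e] w IH]; [apply Geq_refl|].
  eapply Geq_trans; [|exact IH].
  unfold winv; simpl; rewrite <- app_assoc; simpl.
  rewrite <- (Bool.negb_involutive e) at 2.
  exact (Geq_cancel p q (winv w) w g (negb e)).
Qed.

Definition inverse_letters (x y : letter) : bool :=
  match fst x, fst y with
  | Ga, Ga | Gb, Gb => xorb (snd x) (snd y)
  | _, _ => false
  end.

Definition cancel_cons (x : letter) (w : word) : word :=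
  match w with
  | y :: w' => if inverse_letters x y then w' else x :: w
  | [] => [x]
  end.

Fixpoint free_reduce (w : word) : word :=
  match w with
  | [] => []
  | x :: w' => cancel_cons x (free_reduce w')
  end.

Lemma Geq_cancel_cons p q x w : Geq p q (x :: w) (cancel_cons x w).
Proof.
  destruct x as [[] []], w as [|[[] []] w']; try apply Geq_refl;
    exact (Geq_cancel p q [] w' _ _).
Qed.

Lemma Geq_free_reduce p q w : Geq p q w (free_reduce w).
Proof.
  induction w as [|x w IH]; [apply Geq_refl|].
  eapply Geq_trans; [apply Geq_cons, IH | apply Geq_cancel_cons].
Qed.

Lemma Geq_of_free_reduce p q u v :
  free_reduce u = free_reduce v -> Geq p q u v.
Proof.
  intro E. eapply Geq_trans; [apply Geq_free_reduce|].
  rewrite E. apply Geq_sym, Geq_free_reduce.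
Qed.

Definition conj_word (h w : word) : word := winv h ++ w ++ h.

Lemma binv_eq_merid_conj_product p q :
  Geq p q (merid ++ conj_word (wbinv ++ wbinv) merid
                 ++ conj_word (wb ++ wb ++ merid) merid) wbinv.
Proof.
  eapply Geq_trans.
  - apply Geq_sym.
    exact (Geq_rel1 p q (wainv ++ wbinv ++ wbinv ++ wb ++ wb ++ wainv)
             (wbinv ++ wbinv ++ wbinv ++ wbinv ++ conj_word (wb ++ wb ++ merid) merid)).
  - now apply Geq_of_free_reduce.
Qed.

Section PositiveWords.

Variables (p q : Z) (act : word -> R -> R).
Hypothesis Hact : right_action_by_homeo p q act.

Definition positive (w : word) : Prop := forall x, x < act w x.

Lemma act_Geq u v x : Geq p q u v -> act u x = act v x.
Proof. intro H. exact (proj1 Hact u v H x). Qed.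

Lemma act_app u v x : act (u ++ v) x = act v (act u x).
Proof. exact (proj1 (proj2 (proj2 Hact)) u v x). Qed.

Lemma act_nil x : act [] x = x.
Proof. exact (proj1 (proj2 Hact) x). Qed.

Lemma act_lt_mono w x y : x < y -> act w x < act w y.
Proof. exact (proj1 (proj2 (proj2 (proj2 (proj2 Hact)) w)) x y). Qed.

Lemma act_cancel u v x : Geq p q (u ++ v) [] -> act v (act u x) = x.
Proof. intro H. now rewrite <- act_app, (act_Geq _ _ _ H), act_nil. Qed.

Lemma positive_app u v : positive u -> positive v -> positive (u ++ v).
Proof.
  intros Hu Hv x. rewrite act_app.
  specialize (Hu x). specialize (Hv (act u x)). lra.
Qed.

Lemma positive_wrep w n : positive w -> positive (wrep (S n) w).
Proof.
  intro Hw. induction n as [|n IH].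
  - unfold wrep; simpl. now rewrite app_nil_r.
  - exact (positive_app w _ Hw IH).
Qed.

Lemma positive_wpow w z : (0 < z)%Z -> positive w -> positive (wpow w z).
Proof.
  intros Hz Hw. destruct z as [|n|n]; try lia; simpl.
  destruct (Pos2Nat.is_succ n) as [m ->]. now apply positive_wrep.
Qed.

Lemma positive_conj h w : positive w -> positive (conj_word h w).
Proof.
  intros Hw x. unfold conj_word. rewrite !act_app.
  rewrite <- (act_cancel (winv h) h x (Geq_winv_app p q h)) at 1.
  apply act_lt_mono, Hw.
Qed.

End PositiveWords.

Theorem mainTheorem8 :
  forall (p q : Z), Z.gcd p q = 1%Z -> (0 < q)%Z ->
  forall k : word,
    Geq p q merid (wpow k q) -> Geq p q longi (wpow k (- p)) ->
  forall act : word -> R -> R, right_action_by_homeo p q act ->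
    (forall x, act k x > x) ->
    forall x, x > act wb x.
Proof.
  intros p q _ Hq k Hm _ act Hact Hk x.
  assert (Hmerid : positive act merid).
  { intro y. rewrite (act_Geq p q act Hact _ _ y Hm).
    exact (positive_wpow p q act Hact k q Hq Hk y). }
  assert (Hbinv : positive act wbinv).
  { intro y. rewrite <- (act_Geq p q act Hact _ _ y (binv_eq_merid_conj_product p q)).
    apply (positive_app p q act Hact); [exact Hmerid|].
    apply (positive_app p q act Hact); apply (positive_conj p q act Hact), Hmerid. }
  pose proof (Hbinv (act wb x)) as H.
  rewrite (act_cancel p q act Hact wb wbinv x) in H; [lra|].
  now apply Geq_of_free_reduce.
Qed.
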